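(* Let $S$ be an inductive $E$-demigroup with associated function $\cdot:S\times E\to E$. Then $C^d_E(S)$ is an inductive constellation, and for all $(f,s)\in C^d_E(S)$ and $e\in E$ the co-restriction is $$(f,s)|(e,e)=\big(f\wedge(s\cdot e),\,(f\wedge(s\cdot e))s\big),$$ where $\wedge$ is the meet in $(E,\le_r)$.
   Context: For a semigroup $S$, $E(S)$ is its set of idempotents; for $e,f\in E(S)$, $e\le_r f$ iff $e=ef$. $E\subseteq E(S)$ is right pre-reduced if $e=ef$ and $f=fe$ imply $e=f$ for $e,f\in E$. A demigroup is a semigroup $S$ with unary $d$ such that $d(x)\in E(S)$, $d(x)x=x$, $d(xy)=d(xd(y))$ for all $x,y$. For $E\subseteq E(S)$, $S$ is an $E$-demigroup if $d(s)\in E$ for all $s$ and $ed(e)=e$ for all $e\in E$. It is inductive if $E$ is right pre-reduced, $(E,\le_r)$ is a meet-semilattice with meet $\wedge$, and there is a function $\cdot:S\times E\to E$ with (I1) for all $t\in S$, $e\in E$, $s\in S$: ($ste=st$ and $sd(t)=s$) iff $s(t\cdot e)=s$; (I2) for $s\in S$, $e,f\in E$: $se=sf=s$ implies $s(e\wedge f)=s$. $C_E(S)=\{(e,s)\in E\times S\mid es=s\}$ with partial product $(e,s)\circ(f,t)=(e,st)$ defined exactly when $sf=s$, and $D((e,s))=(e,e)$; $C^d_E(S)=\{(e,s)\in C_E(S)\mid d(e)=d(s)\}$ with restricted operations. A constellation is a set $P$ with partial binary $\circ$ and unary $D$ such that (C1) if $x\circ(y\circ z)$ exists then so does $(x\circ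 y)\circ z$ and they are equal; (C2) if $x\circ y$ and $y\circ z$ exist then $x\circ(y\circ z)$ exists; (C3) $D(x)$ is the unique right identity $e$ (i.e. $a\circ e=a$ whenever defined) with $e\circ x=x$. Natural quasiorder: $s\le t$ iff $D(s)\circ t$ exists and equals $s$; normal if this is a partial order. $P$ is inductive if it is normal and (O4) for all $e\in D(P)=\{D(x)\mid x\in P\}$ and $a\in P$ there is a largest $x$ (natural order) with $x\le a$ and $x\circ e$ defined, denoted $a|e$ (the co-restriction of $a$ to $e$); (O5) for $x,y\in P$, $e\in D(P)$, if $x\circ y$ exists then $D((x\circ y)|e)=D(x|D(y|e))$. *)

Set Implicit Arguments.

Section DefsSemigroup.
Variable S : Type.
Variable mul : S -> S -> S.

Definition semigroup : Prop :=
  forall x y z : S, mul x (mul y z) = mul (mul x y) z.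

Definition idempotent (e : S) : Prop := mul e e = e.

Definition le_r (e f : S) : Prop := e = mul e f.

Definition right_pre_reduced (E : S -> Prop) : Prop :=
  forall e f, E e -> E f -> e = mul e f -> f = mul f e -> e = f.

Definition demigroup (d : S -> S) : Prop :=
  semigroup /\
  (forall x, idempotent (d x)) /\
  (forall x, mul (d x) x = x) /\
  (forall x y, d (mul x y) = d (mul x (d y))).

Definition E_demigroup (d : S -> S) (E : S -> Prop) : Prop :=
  demigroup d /\
  (forall e, E e -> idempotent e) /\
  (forall s, E (d s)) /\
  (forall e, E e -> mul e (d e) = e).

Definition is_meet (E : S -> Prop) (meet : S -> S -> S) : Prop :=
  forall e f, E e -> E f ->
    E (meet e f) /\ le_r (meet e f) e /\ le_r (meet e f) f /\
    (forall g, E g -> le_r g e -> le_r g f -> le_r g (meet e f)).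

(* Inductive E-demigroup with meet [meet] and associated function
   [dot : S x E -> E] (given as a total function, only used on E in
   its second argument). *)
Definition inductive_E_demigroup (d : S -> S) (E : S -> Prop)
    (meet : S -> S -> S) (dot : S -> S -> S) : Prop :=
  E_demigroup d E /\
  right_pre_reduced E /\
  is_meet E meet /\
  (forall t e, E e -> E (dot t e)) /\
  (* (I1) *)
  (forall t e s, E e ->
     ((mul (mul s t) e = mul s t /\ mul s (d t) = s) <-> mul s (dot t e) = s)) /\
  (* (I2) *)
  (forall s e f, E e -> E f -> mul s e = s -> mul s f = s -> mul s (meet e f) = s).

(* C^d_E(S): carrier S*S restricted by the predicate below *)
Definition CdE_P (d : S -> S) (E : S -> Prop) (p : S * S) : Prop :=
  E (fst p) /\ mul (fst p) (snd p) = snd p /\ d (fst p) = d (snd p).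

Definition CdE_def (p q : S * S) : Prop := mul (snd p) (fst q) = snd p.

Definition CdE_op (p q : S * S) : S * S := (fst p, mul (snd p) (snd q)).

Definition CdE_D (p : S * S) : S * S := (fst p, fst p).

End DefsSemigroup.

Section DefsConstellation.
(* A constellation structure on the subset P of T: partial product given by
   the domain-of-definition predicate [def] and the value [op] (only
   meaningful where [def] holds), and unary [D]. *)
Variable T : Type.
Variable P : T -> Prop.
Variable def : T -> T -> Prop.
Variable op : T -> T -> T.
Variable D : T -> T.

Definition right_identity (e : T) : Prop :=
  forall a, P a -> def a e -> op a e = a.

Definition constellation : Prop :=
  (forall x y, P x -> P y -> def x y -> P (op x y)) /\
  (forall x, P x -> P (D x)) /\
  (* (C1) *)
  (forall x y z, P x -> P y -> P z -> def y z -> def x (op y z) ->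
     def x y /\ def (op x y) z /\ op (op x y) z = op x (op y z)) /\
  (* (C2) *)
  (forall x y z, P x -> P y -> P z -> def x y -> def y z -> def x (op y z)) /\
  (* (C3) *)
  (forall x, P x ->
     right_identity (D x) /\ def (D x) x /\ op (D x) x = x /\
     (forall e, P e -> right_identity e -> def e x -> op e x = x -> e = D x)).

Definition nat_le (s t : T) : Prop := def (D s) t /\ op (D s) t = s.

Definition normal : Prop :=
  (forall x, P x -> nat_le x x) /\
  (forall x y z, P x -> P y -> P z -> nat_le x y -> nat_le y z -> nat_le x z) /\
  (forall x y, P x -> P y -> nat_le x y -> nat_le y x -> x = y).

Definition in_DP (e : T) : Prop := exists x, P x /\ e = D x.

Definition is_corestriction (a e x : T) : Prop :=
  P x /\ nat_le x a /\ def x e /\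
  (forall y, P y -> nat_le y a -> def y e -> nat_le y x).

Definition inductive_constellation : Prop :=
  constellation /\ normal /\
  (* (O4) *)
  (forall e a, in_DP e -> P a -> exists x, is_corestriction a e x) /\
  (* (O5) *)
  (forall x y e c1 c2 c3, P x -> P y -> in_DP e -> def x y ->
     is_corestriction (op x y) e c1 ->
     is_corestriction y e c2 ->
     is_corestriction x (D c2) c3 ->
     D c1 = D c3).

End DefsConstellation.

From Stdlib Require Import Setoid.

(* The heart of the argument is
   [below_meet_dot]: for (f,s) in C^d_E(S) and any g with g f = g,
   g ≤ f ∧ (s·e) holds iff (g s) e = g s; this is where (I1) and (I2)
   enter.  It yields the co-restriction formula, hence (O4), and by
   uniqueness of co-restrictions it reduces (O5) to an identity between
   two meets in E, settled by right pre-reducedness. *)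

Set Implicit Arguments.

Section CorestrictionUnique.
Variables (T : Type) (P : T -> Prop) (def : T -> T -> Prop)
          (op : T -> T -> T) (D : T -> T).

Lemma corestriction_unique a e x y :
  normal P def op D ->
  is_corestriction P def op D a e x -> is_corestriction P def op D a e y ->
  x = y.
Proof.
  intros [_ [_ antisym]] [Px [xa [xe x_max]]] [Py [ya [ye y_max]]].
  apply antisym; auto.
Qed.

End CorestrictionUnique.

Section CdEConstellation.
Variables (S : Type) (mul : S -> S -> S) (d : S -> S) (E : S -> Prop).
Hypothesis assoc : semigroup mul.
Hypothesis E_idem : forall e, E e -> idempotent mul e.
Hypothesis d_mul : forall x y, d (mul x y) = d (mul x (d y)).
Hypothesis E_d_right : forall e, E e -> mul e (d e) = e.
Hypothesis E_rpr : right_pre_reduced mul E.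

Local Notation P := (CdE_P mul d E).
Local Notation def := (CdE_def mul).
Local Notation op := (CdE_op mul).
Local Notation D := (@CdE_D S).

Lemma CdE_idem_pair g : E g -> P (g, g).
Proof. intros Eg. repeat split; [exact Eg | apply E_idem; exact Eg]. Qed.

(* C^d_E(S) is closed under its partial product; d(st) = d(s) when s f = s
   and d f = d t is where the congruence law d(xy) = d(x d(y)) is used. *)
Lemma CdE_op_closed x y : P x -> P y -> def x y -> P (op x y).
Proof.
  destruct x as [e s], y as [f t].
  unfold CdE_P, CdE_def, CdE_op; simpl.
  intros [Ee [es des]] [Ef [ft dft]] sf.
  split; [exact Ee | split].
  - rewrite assoc, es. reflexivity.
  - rewrite d_mul, <- dft, <- d_mul, sf. exact des.
Qed.

Lemma CdE_D_closed x : P x -> P (D x).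
Proof. destruct x as [e s]. intros [Ee _]. exact (CdE_idem_pair Ee). Qed.

Lemma CdE_constellation : constellation P def op D.
Proof.
  split; [exact CdE_op_closed | split; [exact CdE_D_closed | split; [| split]]].
  - intros [e s] [f t] [g u]; unfold CdE_def, CdE_op; simpl.
    intros _ _ _ tg sf.
    split; [exact sf | split].
    + rewrite <- assoc, tg. reflexivity.
    + rewrite assoc. reflexivity.
  - intros [e s] [f t] [g u]; unfold CdE_def, CdE_op; simpl. auto.
  - intros [e s] [Ee [es _]].
    unfold right_identity, CdE_def, CdE_op, CdE_D; simpl in *.
    split; [| split; [apply E_idem; exact Ee | split]].
    + intros [g u] _; simpl. intros ue. rewrite ue. reflexivity.
    + rewrite es. reflexivity.
    + intros [g v] [_ [gv _]] v_right_id _ v_op; simpl in *.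
      injection v_op as ge _. subst g.
      (* (e,v) is a right identity applicable to (e,e), forcing e v = e. *)
      assert (ev : (e, mul e v) = (e, e)).
      { apply (v_right_id (e, e)); [exact (CdE_idem_pair Ee) | apply E_idem; exact Ee]. }
      injection ev as ev. rewrite <- gv, ev. reflexivity.
Qed.

Lemma CdE_nat_le g u f s :
  nat_le def op D (g, u) (f, s) <-> mul g f = g /\ mul g s = u.
Proof.
  unfold nat_le, CdE_def, CdE_op, CdE_D; simpl.
  split; intros [gf gs]; split; try exact gf.
  - injection gs as gs. exact gs.
  - rewrite gs. reflexivity.
Qed.

(* The natural order is a partial order; antisymmetry is exactly right
   pre-reducedness of E. *)
Lemma CdE_normal : normal P def op D.
Proof.
  split; [| split].
  - intros [e s] [Ee [es _]]. apply CdE_nat_le. split; [apply E_idem | ]; assumption.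
  - intros [e s] [f t] [g u] _ _ _ [ef et]%CdE_nat_le [fg fu]%CdE_nat_le.
    apply CdE_nat_le. split.
    + rewrite <- ef, <- assoc, fg. reflexivity.
    + rewrite <- et, <- fu, assoc, ef. reflexivity.
  - intros [e s] [f t] [Ee _] [Ef _] [ef et]%CdE_nat_le [fe fs]%CdE_nat_le.
    simpl in Ee, Ef.
    assert (e = f) by (apply E_rpr; auto). subst f.
    rewrite <- fs, <- et, assoc, (E_idem Ee), et. reflexivity.
Qed.

(* If (f,s) is in C^d_E(S) and g f = g then g d(s) = g, because
   d(s) = d(f) and f d(f) = f. *)
Lemma absorb_d f s g : P (f, s) -> mul g f = g -> mul g (d s) = g.
Proof.
  intros [Ef [_ dfs]] gf. simpl in *.
  rewrite <- dfs. rewrite <- gf at 1.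
  rewrite <- assoc, E_d_right by exact Ef. exact gf.
Qed.

Variables (meet dot : S -> S -> S).
Hypothesis meet_spec : is_meet mul E meet.
Hypothesis dot_E : forall t e, E e -> E (dot t e).
Hypothesis I1 : forall t e s, E e ->
  ((mul (mul s t) e = mul s t /\ mul s (d t) = s) <-> mul s (dot t e) = s).
Hypothesis I2 : forall s e f, E e -> E f ->
  mul s e = s -> mul s f = s -> mul s (meet e f) = s.

Lemma below_meet_dot f s e g : P (f, s) -> E e -> mul g f = g ->
  mul g (meet f (dot s e)) = g <-> mul (mul g s) e = mul g s.
Proof.
  intros Pfs Ee gf.
  assert (Ef : E f) by exact (proj1 Pfs).
  assert (Ede : E (dot s e)) by (apply dot_E; exact Ee).
  destruct (meet_spec Ef Ede) as [_ [_ [m_dot _]]].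
  split.
  - intros gm.
    assert (g_dot : mul g (dot s e) = g).
    { rewrite <- gm at 1. rewrite <- assoc, <- m_dot. exact gm. }
    apply (@I1 s e g Ee) in g_dot. exact (proj1 g_dot).
  - intros gse.
    apply I2; [exact Ef | exact Ede | exact gf |].
    apply (@I1 s e g Ee). split; [exact gse | exact (absorb_d Pfs gf)].
Qed.

Lemma CdE_corestriction f s e : P (f, s) -> E e ->
  is_corestriction P def op D (f, s) (e, e)
    (meet f (dot s e), mul (meet f (dot s e)) s).
Proof.
  intros Pfs Ee.
  assert (Ef : E f) by exact (proj1 Pfs).
  destruct (meet_spec Ef (dot_E s Ee)) as [Em [m_f _]].
  set (m := meet f (dot s e)) in *.
  assert (mm : mul m m = m) by (apply E_idem; exact Em).
  split; [| split; [| split]].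
  - apply (CdE_op_closed (CdE_idem_pair Em) Pfs). exact (eq_sym m_f).
  - apply CdE_nat_le. split; [exact (eq_sym m_f) | reflexivity].
  - apply (below_meet_dot Pfs Ee (eq_sym m_f)). exact mm.
  - intros [g u] _ [gf gs]%CdE_nat_le ue.
    unfold CdE_def in ue; simpl in ue. rewrite <- gs in ue.
    assert (gm : mul g m = g) by exact (proj2 (below_meet_dot Pfs Ee gf) ue).
    apply CdE_nat_le. split; [exact gm |].
    rewrite assoc, gm. exact gs.
Qed.

Lemma CdE_in_DP ee : in_DP P D ee -> exists h, E h /\ ee = (h, h).
Proof. intros [[h k] [[Eh _] ->]]. exists h. split; [exact Eh | reflexivity]. Qed.

Lemma CdE_O4 ee a : in_DP P D ee -> P a ->
  exists x, is_corestriction P def op D a ee x.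
Proof.
  intros [h [Eh ->]]%CdE_in_DP. destruct a as [f s]. intros Pfs.
  eexists. exact (CdE_corestriction Pfs Eh).
Qed.

(* By uniqueness all three co-restrictions are given by the formula,
   and the claim becomes m1 = m3 for
     m1 = e ∧ (st·h),  m2 = f ∧ (t·h),  m3 = e ∧ (s·m2);
   both inequalities m1 <=_r m3 and m3 <=_r m1 follow from [below_meet_dot]. *)
Lemma CdE_O5 x y ee c1 c2 c3 : P x -> P y -> in_DP P D ee -> def x y ->
  is_corestriction P def op D (op x y) ee c1 ->
  is_corestriction P def op D y ee c2 ->
  is_corestriction P def op D x (D c2) c3 ->
  D c1 = D c3.
Proof.
  destruct x as [e s], y as [f t].
  intros Pes Pft [h [Eh ->]]%CdE_in_DP sf C1 C2 C3.
  unfold CdE_def in sf; simpl in sf.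
  pose proof (CdE_op_closed Pes Pft sf) as Pest.
  assert (Ee : E e) by exact (proj1 Pes). assert (Ef : E f) by exact (proj1 Pft).
  rewrite (corestriction_unique CdE_normal C2 (CdE_corestriction Pft Eh)) in C3.
  destruct (meet_spec Ef (dot_E t Eh)) as [Em2 [m2_f _]].
  set (m2 := meet f (dot t h)) in *.
  rewrite (corestriction_unique CdE_normal C1 (CdE_corestriction Pest Eh)),
          (corestriction_unique CdE_normal C3 (CdE_corestriction Pes Em2)).
  unfold CdE_op, CdE_D; simpl.
  destruct (meet_spec Ee (dot_E (mul s t) Eh)) as [Em1 [m1_e _]].
  destruct (meet_spec Ee (dot_E s Em2)) as [Em3 [m3_e _]].
  set (m1 := meet e (dot (mul s t) h)) in *.
  set (m3 := meet e (dot s m2)) in *.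
  assert (m1_st : mul (mul m1 (mul s t)) h = mul m1 (mul s t)).
  { apply (below_meet_dot Pest Eh (eq_sym m1_e)). apply E_idem; exact Em1. }
  assert (m3_s : mul (mul m3 s) m2 = mul m3 s).
  { apply (below_meet_dot Pes Em2 (eq_sym m3_e)). apply E_idem; exact Em3. }
  assert (m2_t : mul (mul m2 t) h = mul m2 t).
  { apply (below_meet_dot Pft Eh (eq_sym m2_f)). apply E_idem; exact Em2. }
  assert (m1_le_m3 : m1 = mul m1 m3).
  { symmetry. apply (below_meet_dot Pes Em2 (eq_sym m1_e)).
    assert (m1s_f : mul (mul m1 s) f = mul m1 s) by (rewrite <- assoc, sf; reflexivity).
    apply (below_meet_dot Pft Eh m1s_f).
    rewrite <- (assoc m1 s t). exact m1_st. }
  assert (m3_le_m1 : m3 = mul m3 m1).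
  { symmetry. apply (below_meet_dot Pest Eh (eq_sym m3_e)).
    simpl. rewrite (assoc m3 s t), <- m3_s, <- !assoc, (assoc m2 t h), m2_t.
    reflexivity. }
  assert (m1 = m3) as -> by (apply E_rpr; assumption).
  reflexivity.
Qed.

End CdEConstellation.

Theorem proposition3p7 (S : Type) (mul : S -> S -> S) (d : S -> S)
    (E : S -> Prop) (meet : S -> S -> S) (dot : S -> S -> S) :
  inductive_E_demigroup mul d E meet dot ->
  inductive_constellation (CdE_P mul d E) (CdE_def mul) (CdE_op mul) (@CdE_D S) /\
  (forall f s e, CdE_P mul d E (f, s) -> E e ->
     is_corestriction (CdE_P mul d E) (CdE_def mul) (CdE_op mul) (@CdE_D S)
       (f, s) (e, e)
       (meet f (dot s e), mul (meet f (dot s e)) s)).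
Proof.
  intros [[[assoc [_ [_ d_mul]]] [E_idem [_ E_d_right]]]
          [E_rpr [meet_spec [dot_E [I1 I2]]]]].
  split; [split; [| split; [| split]] |].
  - eapply CdE_constellation; eassumption.
  - eapply CdE_normal; eassumption.
  - eapply CdE_O4; eassumption.
  - eapply CdE_O5; eassumption.
  - eapply CdE_corestriction; eassumption.
Qed.
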